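(* Let $\Omega$ be a Polish space, $\mathcal{Q}$ a nonempty convex subset of $\mathfrak{P}(\Omega)$, and $Y:\Omega\to\mathbb{R}^d$ a universally measurable random variable. Assume that the one-period condition $NA(\mathcal{Q})$ holds. Then there exists $\hat p\in\mathcal{Q}$ such that $0\in\mathrm{Ri}\bigl(\mathrm{Conv}(E(\hat p))\bigr)$ and $\mathrm{Aff}(E(\hat p))=\mathrm{Aff}(D)$.
   Context: $\mathfrak{P}(\Omega)$ is the set of Borel probability measures on $\Omega$, each identified with its extension to the universally measurable sets. For $p\in\mathcal{Q}$, $E(p)$ is the intersection of all closed sets $A\subseteq\mathbb{R}^d$ with $p[Y\in A]=1$, and $D$ is the intersection of all closed sets $A\subseteq\mathbb{R}^d$ with $q[Y\in A]=1$ for all $q\in\mathcal{Q}$. A property holds $\mathcal{Q}$-quasi-surely if it holds outside a universally measurable set that is $q$-null for every $q\in\mathcal{Q}$. $NA(\mathcal{Q})$: for every $h\in\mathbb{R}^d$, $h\cdot Y\ge0$ $\mathcal{Q}$-q.s. implies $h\cdot Y=0$ $\mathcal{Q}$-q.s. $\mathrm{Aff}$, $\mathrm{Conv}$ denote affine and convex hulls, and $\mathrm{Ri}$ the relative interior. *)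

From HB Require Import structures.
From mathcomp Require Import all_boot all_order all_algebra.
From mathcomp Require Import all_classical all_reals all_analysis.
Set Implicit Arguments. Unset Strict Implicit. Unset Printing Implicit Defensive.
Import Order.TTheory GRing.Theory Num.Theory.
Import numFieldNormedType.Exports.
Local Open Scope classical_set_scope.
Local Open Scope ring_scope.

Definition polish_space (R : realType) (T : topologicalType) : Prop :=
  (exists S : set T, countable S /\ closure S = setT) /\
  exists dist : T -> T -> R,
    [/\ forall x y, dist x y = 0 <-> x = y,
        forall x y, dist x y = dist y x,
        forall x y z, dist x z <= dist x y + dist y z,
        (forall A : set T, open A <->
           (forall x, A x -> exists2 e : R, 0 < e & [set y | dist x y < e] `<=` A)) &
        (forall u : nat -> T,
           (forall e : R, 0 < e -> exists N : nat, forall m n : nat,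
               (N <= m)%N -> (N <= n)%N -> dist (u m) (u n) < e) ->
           exists x : T, u @ \oo --> x)].

Definition borel (T : topologicalType) : set (set T) := <<s @open T >>.

Notation borelType T := (g_sigma_algebraType (@open T)).

Notation borel_prob T R := (probability (borelType T) R).

Definition univ_measurable (R : realType) (T : ptopologicalType) (A : set T) : Prop :=
  forall mu : borel_prob T R, exists B1 B2 : set T,
    [/\ borel B1, borel B2, B1 `<=` A, A `<=` B2 & mu (B2 `\` B1) = 0%E].

(* [ext_val p A r]: the extension (completion) of p to the universally
   measurable set A takes the value r at A. *)
Definition ext_val (R : realType) (T : ptopologicalType) (p : borel_prob T R)
    (A : set T) (r : \bar R) : Prop :=
  exists B1 B2 : set T,
    [/\ borel B1, borel B2, B1 `<=` A, A `<=` B2 & p B1 = r /\ p B2 = r].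

Definition univ_measurable_fun (R : realType) (T : ptopologicalType) (d : nat)
    (Y : T -> 'rV[R]_d) : Prop :=
  forall B : set 'rV[R]_d, borel B -> univ_measurable R (Y @^-1` B).

Definition convex_probs (R : realType) (T : ptopologicalType)
    (Q : set (borel_prob T R)) : Prop :=
  forall p q, Q p -> Q q -> forall l : R, 0 <= l <= 1 ->
    exists2 r, Q r & forall A : set T, borel A ->
      r A = (l%:E * p A + (1 - l)%:E * q A)%E.

Definition quasi_surely (R : realType) (T : ptopologicalType)
    (Q : set (borel_prob T R)) (P : T -> Prop) : Prop :=
  exists N : set T, [/\ univ_measurable R N,
     (forall q, Q q -> ext_val q N 0%E) &
     forall w, ~ N w -> P w].

Definition dotv (R : realType) (d : nat) (h x : 'rV[R]_d) : R :=
  \sum_(i < d) h 0 i * x 0 i.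

Definition NA (R : realType) (T : ptopologicalType) (d : nat)
    (Q : set (borel_prob T R)) (Y : T -> 'rV[R]_d) : Prop :=
  forall h : 'rV[R]_d,
    quasi_surely Q (fun w => 0 <= dotv h (Y w)) ->
    quasi_surely Q (fun w => dotv h (Y w) = 0).

Definition supp_E (R : realType) (T : ptopologicalType) (d : nat)
    (Y : T -> 'rV[R]_d) (p : borel_prob T R) : set 'rV[R]_d :=
  [set y | forall A : set 'rV[R]_d, closed A -> ext_val p (Y @^-1` A) 1%E -> A y].

Definition supp_D (R : realType) (T : ptopologicalType) (d : nat)
    (Y : T -> 'rV[R]_d) (Q : set (borel_prob T R)) : set 'rV[R]_d :=
  [set y | forall A : set 'rV[R]_d, closed A ->
     (forall q, Q q -> ext_val q (Y @^-1` A) 1%E) -> A y].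

Definition aff_hull (R : realType) (d : nat) (S : set 'rV[R]_d) : set 'rV[R]_d :=
  [set x | exists n : nat, exists v : 'I_n -> 'rV[R]_d, exists l : 'I_n -> R,
     [/\ forall i, S (v i), \sum_(i < n) l i = 1 & x = \sum_(i < n) l i *: v i]].

Definition conv_hull (R : realType) (d : nat) (S : set 'rV[R]_d) : set 'rV[R]_d :=
  [set x | exists n : nat, exists v : 'I_n -> 'rV[R]_d, exists l : 'I_n -> R,
     [/\ forall i, S (v i), forall i, 0 <= l i, \sum_(i < n) l i = 1
       & x = \sum_(i < n) l i *: v i]].

Definition rel_int (R : realType) (d : nat) (C : set 'rV[R]_d) : set 'rV[R]_d :=
  [set x | C x /\ exists2 e : R, 0 < e & ball x e `&` aff_hull C `<=` C].

(* Let S be the union of the supports E(q), q in Q.  Through the supports, NA(Q)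
   says that every h with h.z >= 0 on S vanishes on S.  Compactness of the unit
   sphere of span S reduces this to finitely many points of S, the rows of a
   matrix F spanning S, and Stiemke's lemma turns the finite condition into
   weights lam > 0 with sum 1 and lam F = 0.  Since Q is convex, finitely many
   q in Q can be mixed into one p in Q whose support contains the rows of F; then
   span F = Aff E(p) <= Aff D <= span F, and 0 = lam F is a strictly positive
   convex combination of points of E(p), hence lies in Ri(Conv E(p)). *)

From HB Require Import structures.
From mathcomp Require Import all_boot all_order all_algebra.
From mathcomp Require Import all_classical all_reals all_analysis.
From mathcomp Require Import ring lra.
Set Implicit Arguments. Unset Strict Implicit. Unset Printing Implicit Defensive.
Import Order.TTheory GRing.Theory Num.Theory.
Import numFieldNormedType.Exports.
Local Open Scope classical_set_scope.
Local Open Scope ring_scope.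

Section Dot.
Variables (R : realType) (d : nat).
Implicit Types (h x y : 'rV[R]_d).

Lemma dotvE h x : dotv h x = (x *m h^T) 0 0.
Proof. by rewrite /dotv !mxE; apply: eq_bigr => i _; rewrite mxE mulrC. Qed.

Lemma dotvC h x : dotv h x = dotv x h.
Proof. by apply: eq_bigr => i _; rewrite mulrC. Qed.

Fact dotv_is_linear h : linear_for *%R (dotv h).
Proof. by move=> a x y; rewrite !dotvE mulmxDl -scalemxAl !mxE. Qed.

HB.instance Definition _ h :=
  GRing.isLinear.Build R 'rV[R]_d R *%R (dotv h) (dotv_is_linear h).

Lemma dotvNl h x : dotv (- h) x = - dotv h x.
Proof. by rewrite dotvC linearN dotvC. Qed.

Lemma dotvDl h y x : dotv (h + y) x = dotv h x + dotv y x.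
Proof. by rewrite dotvC linearD /= !(dotvC x). Qed.

Lemma dotvZl a h x : dotv (a *: h) x = a * dotv h x.
Proof. by rewrite dotvC linearZ /= dotvC. Qed.

Lemma dotv_suml I (r : seq I) (P : pred I) (h : I -> 'rV[R]_d) x :
  dotv (\sum_(i <- r | P i) h i) x = \sum_(i <- r | P i) dotv (h i) x.
Proof. by rewrite dotvC linear_sum; apply: eq_bigr => i _; rewrite dotvC. Qed.

Lemma dotv_continuous h : continuous (dotv h).
Proof.
apply: continuous_big => //; first exact: add_continuous.
move=> i _ z; apply: continuousM; first exact: cst_continuous.
exact: coord_continuous.
Qed.

Lemma open_dotv_lt h c : open [set x | dotv h x < c].
Proof.
apply: (@open_comp _ _ (dotv h) [set r | r < c]); last exact: open_lt.
by move=> x _; exact: dotv_continuous.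
Qed.

Lemma open_dotv_neq0 h : open [set x | dotv h x <> 0].
Proof.
apply: (@open_comp _ _ (dotv h) (~` [set 0])); last exact/closed_openC/closed_eq.
by move=> x _; exact: dotv_continuous.
Qed.

Lemma dotv_trmx_col m (A : 'M[R]_(d, m)) j x :
  dotv (col j A)^T x = (x *m A) 0 j.
Proof. by rewrite dotvE trmxK !mxE; apply: eq_bigr => k _; rewrite mxE. Qed.

Lemma dotv_row_mul m (F : 'M[R]_(m, d)) (c : 'rV[R]_m) h :
  dotv h (c *m F) = \sum_i c 0 i * dotv h (row i F).
Proof.
by rewrite mulmx_sum_row linear_sum; apply: eq_bigr => i _; rewrite linearZ.
Qed.

Lemma submx_dotvP m (F : 'M[R]_(m, d)) x :
  reflect (forall h, (forall i, dotv h (row i F) = 0) -> dotv h x = 0)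
          (x <= F)%MS.
Proof.
apply: (iffP idP) => [/submxP [c ->] h hF | xF].
  by rewrite dotv_row_mul big1 // => i _; rewrite hF mulr0.
rewrite submxE; apply/eqP/rowP => j; rewrite [RHS]mxE -dotv_trmx_col.
by apply: xF => i; rewrite dotv_trmx_col -row_mul mulmx_coker !mxE.
Qed.

Lemma closed_submx m (F : 'M[R]_(m, d)) : closed [set x : 'rV_d | (x <= F)%MS].
Proof.
have -> : [set x : 'rV_d | (x <= F)%MS] =
    \bigcap_(j in [set: 'I_d]) (dotv (col j (cokermx F))^T @^-1` [set 0]).
  apply/seteqP; split => x /=; rewrite submxE.
    by move=> /eqP xF j _; rewrite /= dotv_trmx_col xF mxE.
  by move=> xF; apply/eqP/rowP => j; rewrite [RHS]mxE -dotv_trmx_col; apply: xF.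
apply: closed_bigI => j _; apply: closed_comp; last exact: closed_eq.
by move=> x _; exact: dotv_continuous.
Qed.

End Dot.

(* No arbitrage for the one-period model whose price increments range over [S]. *)
Definition geometric_NA (R : realType) (d : nat) (S : set 'rV[R]_d) : Prop :=
  forall h, (forall z, S z -> 0 <= dotv h z) -> forall z, S z -> dotv h z = 0.

Definition row_set (R : realType) m d (F : 'M[R]_(m, d)) : set 'rV[R]_d :=
  range (fun i => row i F).

Section Stiemke.
Variables (R : realType) (d : nat).
Implicit Types (g h : 'rV[R]_d).

Lemma geometric_NA_rowsP m (F : 'M[R]_(m, d)) :
  geometric_NA (row_set F) <->
  forall h, (forall i, 0 <= dotv h (row i F)) -> forall i, dotv h (row i F) = 0.
Proof.
split=> [naF h hF i | naF h hF _ [i _ <-]]; last by apply: naF => j; apply: hF; exists j.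
by apply: naF; [move=> _ [j _ <-] | exists i].
Qed.

Lemma geometric_NA_col_mxP m g (F : 'M[R]_(m, d)) :
  geometric_NA (row_set (col_mx g F)) <->
  forall h, 0 <= dotv h g -> (forall i, 0 <= dotv h (row i F)) ->
    dotv h g = 0 /\ forall i, dotv h (row i F) = 0.
Proof.
have rowE (P : 'rV[R]_d -> Prop) :
    (forall i, P (row i (col_mx g F))) <-> P g /\ forall i, P (row i F).
  split=> [PgF | [Pg PF] i]; last first.
    by case: (split_ordP i) => j ->; rewrite (rowKu, rowKd) // row_id.
  by split=> [|i]; [move: (PgF (lshift m 0)) | move: (PgF (rshift 1 i))];
    rewrite (rowKu, rowKd) // row_id.
split=> [/geometric_NA_rowsP naF h hg hF | naF].
  by apply/(rowE (fun z => dotv h z = 0))/naF/(rowE (fun z => 0 <= dotv h z)).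
apply/geometric_NA_rowsP => h /(rowE (fun z => 0 <= dotv h z)) [hg hF].
exact/(rowE (fun z => dotv h z = 0))/naF.
Qed.

Lemma row_mx_gt0 m n (a : 'rV[R]_m) (b : 'rV[R]_n) :
  (forall i, 0 < a 0 i) -> (forall i, 0 < b 0 i) -> forall i, 0 < row_mx a b 0 i.
Proof.
by move=> a0 b0 i; case: (split_ordP i) => j ->; rewrite (row_mxEl, row_mxEr).
Qed.

Lemma pos_scale_dominates m (l c : 'rV[R]_m) :
  (forall i, 0 < l 0 i) -> exists t, forall i, 0 < t * l 0 i - c 0 i.
Proof.
move=> l0; suff: \forall t \near +oo, forall i, 0 < t * l 0 i - c 0 i.
  exact: filter_ex.
apply: filter_forall => i.
near=> t; rewrite subr_gt0 -ltr_pdivrMr //; near: t.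
exact: nbhs_pinfty_gt (num_real _).
Unshelve. all: by end_near.
Qed.

Section Step.
Variables (m : nat) (g : 'rV[R]_d) (F : 'M[R]_(m, d)).
Hypothesis naF : geometric_NA (row_set (col_mx g F)).

Lemma stiemke_span_step :
  geometric_NA (row_set F) ->
  (exists2 l : 'rV[R]_m, (forall i, 0 < l 0 i) & l *m F = 0) ->
  exists2 l : 'rV[R]_(1 + m), (forall i, 0 < l 0 i) & l *m col_mx g F = 0.
Proof.
move/geometric_NA_col_mxP: naF => naF' _ [l l0 lF].
have /submxP [c gE] : (g <= F)%MS.
  apply/submx_dotvP => h hF.
  wlog hg : h hF / 0 <= dotv h g.
    move=> gF; have [|/ltW hg] := leP 0 (dotv h g); first exact: gF.
    apply/eqP; rewrite -oppr_eq0 -dotvNl; apply/eqP/gF; last by rewrite dotvNl oppr_ge0.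
    by move=> i; rewrite dotvNl hF oppr0.
  by apply: (proj1 (naF' h hg _)) => i; rewrite hF.
have [t lc] := pos_scale_dominates c l0.
exists (row_mx 1 (t *: l - c)).
  apply: row_mx_gt0 => i; first by rewrite [i]ord1 mxE ltr01.
  by rewrite !mxE lc.
by rewrite mul_row_col mul1mx mulmxBl -scalemxAl lF scaler0 -gE sub0r subrr.
Qed.

Lemma stiemke_elim_step h0 :
  (forall i, 0 <= dotv h0 (row i F)) -> (exists j, dotv h0 (row j F) <> 0) ->
  (forall F' : 'M[R]_(m, d), geometric_NA (row_set F') ->
     exists2 l : 'rV[R]_m, (forall i, 0 < l 0 i) & l *m F' = 0) ->
  exists2 l : 'rV[R]_(1 + m), (forall i, 0 < l 0 i) & l *m col_mx g F = 0.
Proof.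
move/geometric_NA_col_mxP: naF => naF' h0F [j h0j] IH.
have h0g : dotv h0 g < 0.
  by rewrite ltNge; apply/negP => /naF' /(_ h0F) [_ h0F0]; apply: h0j.
(* The rows [F_i + c_i g] are orthogonal to [h0], and adding a multiple of [h0]
   to any [h] that is nonnegative on them makes it vanish at [g]. *)
pose a := - dotv h0 g; have a_gt0 : 0 < a by rewrite oppr_gt0.
pose c : 'cV[R]_m := \col_i (dotv h0 (row i F) / a).
have c_ge0 i : 0 <= c i 0 by rewrite mxE divr_ge0 ?h0F ?ltW.
have rowFc i : row i (F + c *m g) = row i F + c i 0 *: g.
  by rewrite linearD /= row_mul [row i c]mx11_scalar mul_scalar_mx mxE.
have /IH [l l0 lF] : geometric_NA (row_set (F + c *m g)).
  apply/geometric_NA_rowsP => h hFc.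
  pose h' := h + (dotv h g / a) *: h0.
  have h'g : dotv h' g = 0.
    by rewrite dotvDl dotvZl -[dotv h0 g]opprK -/a mulrN divfK ?gt_eqF ?subrr.
  have h'F i : dotv h' (row i F) = dotv h (row i (F + c *m g)).
    by rewrite rowFc linearD linearZ /= dotvDl dotvZl mxE; ring.
  have h'F_ge0 i : 0 <= dotv h' (row i F) by rewrite h'F hFc.
  have [|_ h'F0 i] := naF' h' _ h'F_ge0; first by rewrite h'g.
  by rewrite -h'F h'F0.
exists (row_mx (l *m c) l); last first.
  by rewrite mul_row_col -mulmxA addrC -mulmxDr.
apply: row_mx_gt0 => // i; rewrite [i]ord1 mxE (bigD1 j) //=.
apply: ltr_wpDr.
  by apply: sumr_ge0 => k _; exact: mulr_ge0 (ltW (l0 k)) (c_ge0 k).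
by rewrite mulr_gt0 // mxE divr_gt0 // lt_def h0F andbT; apply/eqP.
Qed.

End Step.

Theorem stiemke m (F : 'M[R]_(m, d)) : geometric_NA (row_set F) ->
  exists2 l : 'rV[R]_m, (forall i, 0 < l 0 i) & l *m F = 0.
Proof.
elim: m F => [|m IH] F naF; first by exists 0; [case | rewrite mul0mx].
rewrite -[F](vsubmxK (F : 'M[R]_(1 + m, d))) in naF *.
have [naF'|] := pselect (geometric_NA (row_set (dsubmx (F : 'M[R]_(1 + m, d))))).
  by apply: stiemke_span_step => //; apply: IH.
move/existsNP => [h0] /not_implyP [h0F] /existsNP [_] /not_implyP [[j _ <-]] h0j.
apply: (stiemke_elim_step naF (h0 := h0)) => //; last by exists j.
by move=> i; apply: h0F; exists i.
Qed.

Corollary stiemke_convex n (F : 'M[R]_(n.+1, d)) : geometric_NA (row_set F) ->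
  exists lam : 'rV[R]_n.+1,
    [/\ forall i, 0 < lam 0 i, \sum_i lam 0 i = 1 & lam *m F = 0].
Proof.
move=> /stiemke [l l_gt0 lF]; pose L := \sum_i l 0 i.
have L_gt0 : 0 < L.
  by rewrite /L big_ord_recl ltr_wpDr ?l_gt0 // sumr_ge0 // => i _; exact: ltW.
exists (L^-1 *: l); split.
- by move=> i; rewrite mxE mulr_gt0 ?invr_gt0.
- by under eq_bigr do rewrite mxE; rewrite -mulr_sumr mulVf ?gt_eqF.
- by rewrite -scalemxAl lF scaler0.
Qed.

End Stiemke.

Section FiniteWitnesses.
Variables (R : realType) (d : nat).
Implicit Types (S : set 'rV[R]_d) (h z : 'rV[R]_d).

Lemma spanning_rows S :
  exists m (M : 'M[R]_(m, d)), row_set M `<=` S /\ S `<=` [set z | (z <= M)%MS].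
Proof.
(* Rows in [S] of maximal rank. *)
pose P k := `[< exists m (M : 'M[R]_(m, d)), row_set M `<=` S /\ \rank M = k >].
have P0 : exists k, P k.
  by exists 0%N; apply/asboolP; exists 0%N, 0; split => [z [[]]|]; rewrite ?mxrank0.
have Pd k : P k -> (k <= d)%N by move=> /asboolP [m [M [_ <-]]]; exact: rank_leq_col.
case: (ex_maxnP P0 Pd) => k /asboolP [m [M [MS <-]]] Mmax.
exists m, M; split => // z Sz; apply: contraT => zM.
suff : P (\rank (col_mx M z)).
  have MzM : (M < M + z)%MS by rewrite ltmxE addsmxSl addsmx_sub submx_refl.
  by move/Mmax; rewrite leqNgt -addsmxE rank_ltmx.
apply/asboolP; exists (m + 1)%N, (col_mx M z); split => // _ [i _ <-].
by case: (split_ordP i) => j ->; rewrite (rowKu, rowKd) ?row_id //; apply: MS; exists j.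
Qed.

Lemma dotv_mulmx_tr m h (a : 'rV[R]_m) (M : 'M[R]_(m, d)) :
  dotv h (a *m M) = dotv (h *m M^T) a.
Proof. by rewrite !dotvE trmx_mul trmxK mulmxA. Qed.

Lemma compact_unit_submx m n (A : 'M[R]_(n, m)) :
  compact [set v : 'rV[R]_m | (v <= A)%MS /\ `|v| = 1].
Proof.
apply: bounded_closed_compact.
  change (\forall r \near +oo,
    [set v : 'rV[R]_m | (v <= A)%MS /\ `|v| = 1] `<=` [set v | `|v| <= r]).
  near=> r => v [_ /= ->]; near: r; exact: nbhs_pinfty_ge.
apply: closedI; first exact: closed_submx.
apply: (@preimage_closed _ _ (fun v : 'rV[R]_m => `|v|) [set 1]); last exact: closed_eq.
by move=> v _; exact: norm_continuous.
Unshelve. all: by end_near.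
Qed.

Lemma finite_NA_witnesses S : geometric_NA S ->
  exists s : seq 'rV[R]_d, (forall z, z \in s -> S z) /\
    forall h, (forall z, z \in s -> 0 <= dotv h z) -> forall z, S z -> dotv h z = 0.
Proof.
move=> naS; have [m [M [MS SM]]] := spanning_rows S.
(* In the coordinates [a z] of [z] w.r.t. the rows of [M], compactness is used on
   the unit sphere of the range of [M^T]. *)
pose a z := z *m pinvmx M.
have dotv_a h z : S z -> dotv h z = dotv (a z) (h *m M^T).
  by move=> Sz; rewrite [RHS]dotvC -dotv_mulmx_tr mulmxKpV ?SM.
pose U z := [set v : 'rV[R]_m | dotv (a z) v < 0].
have coverK : [set v | (v <= M^T)%MS /\ `|v| = 1] `<=` cover S U.
  move=> _ [/submxP [h ->] v1]; apply: contrapT => noz.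
  have hS z : S z -> 0 <= dotv h z.
    by move=> Sz; rewrite dotv_a // leNgt; apply/negP => hz; apply: noz; exists z.
  suff hM0 : h *m M^T = 0.
    by move: v1; rewrite hM0 normr0 => /eqP; rewrite eq_sym oner_eq0.
  apply/rowP => i; rewrite [RHS]mxE -dotv_trmx_col -tr_row trmxK dotvC.
  by apply: (naS h hS); apply: MS; exists i.
move: (compact_unit_submx (A := M^T)); rewrite compact_cover.
case/(_ _ S U (fun z _ => @open_dotv_lt _ _ (a z) 0) coverK) => D DS KD.
exists (finmap.enum_fset D); split => [z zD | h hD z Sz].
  by have := DS z zD; rewrite inE.
suff hM0 : h *m M^T = 0 by rewrite dotv_a // hM0 linear0.
apply: contrapT => /eqP hM0; have hM_gt0 : 0 < `|h *m M^T| by rewrite normr_gt0.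
have [|y yD] := KD (`|h *m M^T|^-1 *: (h *m M^T)).
  split; first by apply/scalemx_sub/submxP; exists h.
  by rewrite normrZ normrV ?unitfE ?gt_eqF // normr_id mulVf ?gt_eqF.
have Sy : S y by have := DS y yD; rewrite inE.
by rewrite /U /= linearZ /= -dotv_a // pmulr_rlt0 ?invr_gt0 // ltNge hD.
Qed.

Lemma finite_NA_family S z0 : S z0 -> geometric_NA S ->
  exists n (F : 'M[R]_(n.+1, d)),
    [/\ row_set F `<=` S, S `<=` [set z | (z <= F)%MS] & geometric_NA (row_set F)].
Proof.
move=> Sz0 naS; have [s [sS sNA]] := finite_NA_witnesses naS.
pose F := \matrix_(i < (size s).+1) (z0 :: s)`_i.
have FS : row_set F `<=` S.
  move=> _ [i _ <-]; rewrite rowK.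
  by have /predU1P [->|/sS] // := mem_nth 0 (ltn_ord i : (i < size (z0 :: s))%N).
have sF z : z \in s -> exists i, row i F = z.
  move=> zs; have zs' : (index z (z0 :: s) < (size s).+1)%N.
    by rewrite -[(size s).+1]/(size (z0 :: s)) index_mem in_cons zs orbT.
  by exists (Ordinal zs'); rewrite rowK nth_index // in_cons zs orbT.
have hF h : (forall i, 0 <= dotv h (row i F)) -> forall z, S z -> dotv h z = 0.
  by move=> hF; apply: sNA => z /sF [i <-].
exists (size s), F; split => // [z Sz|].
  by apply/submx_dotvP => h hF0; apply: hF => // i; rewrite hF0.
by apply/geometric_NA_rowsP => h hF0 i; apply: hF => //; apply: FS; exists i.
Qed.

End FiniteWitnesses.

Section Supports.
Variables (R : realType) (T : ptopologicalType) (d : nat) (Y : T -> 'rV[R]_d).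
Implicit Types (p q r : borel_prob T R) (A : set T) (K U : set 'rV[R]_d).

Lemma ext_val0_negligible p A : ext_val p A 0%E -> p.-negligible A.
Proof. by move=> [B1 [B2 [_ mB2 _ AB2 [_ pB2]]]]; exists B2. Qed.

Lemma negligible_ext_val0 p A : p.-negligible A -> ext_val p A 0%E.
Proof.
move=> [B [mB pB AB]]; exists set0, B; split => //.
exact: (@measurable0 _ (borelType T)).
Qed.

Lemma ext_val1_negligibleC p A : ext_val p A 1%E -> p.-negligible (~` A).
Proof.
move=> [B1 [_ [mB1 _ B1A _ [pB1 _]]]]; exists (~` B1); split.
- exact: (@measurableC _ (borelType T)).
- by rewrite probability_setC // pB1 subee.
- by move=> w nAw /B1A.
Qed.

Lemma negligible_ext_val1C p A : p.-negligible A -> ext_val p (~` A) 1%E.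
Proof.
move=> [B [mB pB AB]]; exists (~` B), setT; split => //.
- exact: (@measurableC _ (borelType T)).
- exact: (@measurableT _ (borelType T)).
- by move=> w nBw /AB.
- by rewrite probability_setC // pB sube0 probability_setT.
Qed.

Lemma supp_EP p y :
  supp_E Y p y <-> forall U, open U -> U y -> ~ p.-negligible (Y @^-1` U).
Proof.
split=> [Ey U oU Uy /negligible_ext_val1C | Ey A cA /ext_val1_negligibleC YA].
  by move/(Ey _ (open_closedC oU)).
by apply: contrapT => Ay; exact: Ey (closed_openC cA) Ay YA.
Qed.

Lemma supp_DP Q y :
  supp_D Y Q y <->
  forall U, open U -> U y -> ~ forall q, Q q -> q.-negligible (Y @^-1` U).
Proof.
split=> [Dy U oU Uy YU | Dy A cA YA].
  by apply: Dy (open_closedC oU) _ Uy => q /YU /negligible_ext_val1C.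
apply: contrapT => Ay; apply: Dy (closed_openC cA) Ay _ => q Qq.
exact: ext_val1_negligibleC (YA q Qq).
Qed.

Lemma supp_E_sub_D Q q : Q q -> supp_E Y q `<=` supp_D Y Q.
Proof.
by move=> Qq y /supp_EP Ey; apply/supp_DP => U oU Uy /(_ q Qq); exact: Ey.
Qed.

Lemma supp_E_dominated p r :
  (forall A, r.-negligible A -> p.-negligible A) -> supp_E Y p `<=` supp_E Y r.
Proof. by move=> rp y /supp_EP Ey; apply/supp_EP => U oU Uy /rp; exact: Ey. Qed.

Lemma compact_meets_supp_E p K :
  compact K -> ~ p.-negligible (Y @^-1` K) -> exists2 z, K z & supp_E Y p z.
Proof.
move=> cK YK; apply: contrapT => noz; apply: YK.
pose V := [set U | open U /\ p.-negligible (Y @^-1` U)].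
have coverK : K `<=` cover V id.
  move=> z Kz; have /supp_EP : ~ supp_E Y p z by move=> Ez; apply: noz; exists z.
  by move=> /existsNP [U] /not_implyP [oU] /not_implyP [Uz] /contrapT YU; exists U.
move: cK; rewrite compact_cover => /(_ _ V id (fun U => @proj1 _ _) coverK) [D DV KD].
pose N n := Y @^-1` nth set0 (finmap.enum_fset D) n.
apply: (negligibleS (mu := p) (A := \bigcup_n N n)); last first.
  apply: negligible_bigcup => n; rewrite /N.
  have [nD|Dn] := ltnP n (size (finmap.enum_fset D)); last first.
    by rewrite nth_default //; exact: negligible_set0.
  by have := DV _ (mem_nth set0 nD); rewrite inE => -[].
move=> w /KD [U UD UYw]; exists (index U (finmap.enum_fset D)) => //.
by rewrite /N /= nth_index.
Qed.

Lemma supp_E_meets_pos p (f : 'rV[R]_d -> R) : continuous f ->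
  ~ p.-negligible (Y @^-1` [set z | 0 < f z]) -> exists2 z, 0 < f z & supp_E Y p z.
Proof.
move=> cf Yf; pose K n := [set z | 1 <= n%:R * f z /\ `|z| <= n%:R].
have [n Kn] : exists n, ~ p.-negligible (Y @^-1` K n).
  apply: contrapT => /forallNP YK; apply: Yf.
  apply: (negligibleS (mu := p) (A := \bigcup_n (Y @^-1` K n))).
    move=> w /= fY; have : \forall n \near \oo, (f (Y w))^-1 <= n%:R /\ `|Y w| <= n%:R.
      by near=> n; split; near: n; exact: nbhs_infty_ger.
    move=> /filter_ex [n [fn Yn]]; exists n => //; split => //.
    by rewrite /= -ler_pdivrMr // div1r.
  by apply: negligible_bigcup => n; apply: contrapT.
have cK : compact (K n).
  apply: bounded_closed_compact.
    change (\forall r \near +oo, K n `<=` [set z | `|z| <= r]).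
    near=> r => z [_ /= zn]; apply: le_trans zn _; near: r; exact: nbhs_pinfty_ge.
  apply: closedI.
    apply: (@preimage_closed _ _ (fun z => n%:R * f z) [set r | 1 <= r]).
      move=> z _; apply: (@continuousM _ _ (fun=> n%:R) f); last exact: cf.
      exact: cst_continuous.
    exact: closed_ge.
  apply: (@preimage_closed _ _ (fun z : 'rV[R]_d => `|z|) [set r | r <= n%:R]).
    by move=> z _; exact: norm_continuous.
  exact: closed_le.
have [z [nf _] Ez] := compact_meets_supp_E cK Kn.
by exists z => //; have := ler0n R n; nra.
Unshelve. all: by end_near.
Qed.

Lemma supp_E_neq0 p : supp_E Y p !=set0.
Proof.
have [|z _ Ez] := @supp_E_meets_pos p (fun=> 1) (@cst_continuous _ R 1); last by exists z.
rewrite (_ : _ @^-1` _ = setT); last by apply/seteqP; split => // w; rewrite /= ltr01.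
move=> [B [_ pB TB]]; move: pB; rewrite (_ : B = setT) ?probability_setT.
  by move/eqP; rewrite eqe oner_eq0.
by apply/seteqP; split => // w _; exact: TB.
Qed.

Lemma negligible_dotv_lt0 p h : (forall z, supp_E Y p z -> 0 <= dotv h z) ->
  p.-negligible [set w | dotv h (Y w) < 0].
Proof.
move=> hE; apply: contrapT => hY.
have [|YN|z] := @supp_E_meets_pos p (fun z => - dotv h z).
- by move=> z; apply: continuousN; exact: dotv_continuous.
- by apply/hY/(negligibleS _ YN) => w /=; rewrite oppr_gt0.
- by rewrite oppr_gt0 ltNge => /negP hz /hE.
Qed.

Lemma convex_probs_dominating Q p q : convex_probs Q -> Q p -> Q q ->
  exists2 r, Q r & forall A, r.-negligible A -> p.-negligible A /\ q.-negligible A.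
Proof.
move=> cQ Qp Qq; have half01 : 0 <= (2^-1 : R) <= 1 by apply/andP; split; lra.
have [r Qr rE] := cQ p q Qp Qq _ half01.
exists r => // A [B [mB rB AB]]; move: rB; rewrite rE //.
have half_gt0 : 0 < (2^-1 : R) by lra.
have half'_gt0 : 0 < 1 - (2^-1 : R) by lra.
move/eqP; rewrite padde_eq0 ?mule_ge0 ?lee_fin ?(ltW half_gt0) ?(ltW half'_gt0) //.
rewrite !mule_eq0 !eqe (gt_eqF half_gt0) (gt_eqF half'_gt0) /=.
by move=> /andP [/eqP pB /eqP qB]; split; exists B.
Qed.

Lemma supp_E_mixture Q q0 (s : seq 'rV[R]_d) : Q q0 -> convex_probs Q ->
  (forall z, z \in s -> (\bigcup_(q in Q) supp_E Y q) z) ->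
  exists2 p, Q p & forall z, z \in s -> supp_E Y p z.
Proof.
move=> Qq0 cQ; elim: s => [|z s IH] sQ; first by exists q0.
have [p Qp Ep] := IH (fun y ys => sQ y (mem_behead (ys : y \in behead (z :: s)))).
have [q Qq Ez] := sQ z (mem_head z s).
have [r Qr rpq] := convex_probs_dominating cQ Qp Qq.
exists r => // y; rewrite in_cons => /predU1P [->|/Ep].
  by apply: (supp_E_dominated (p := q)) Ez => A /rpq [].
by apply: supp_E_dominated => A /rpq [].
Qed.

Lemma geometric_NA_supp_E Q : univ_measurable_fun Y -> NA Q Y ->
  geometric_NA (\bigcup_(q in Q) supp_E Y q).
Proof.
move=> mY naQ h hS.
have qs : quasi_surely Q (fun w => 0 <= dotv h (Y w)).
  exists [set w | dotv h (Y w) < 0]; split.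
  - by apply: (mY [set z | dotv h z < 0]); apply: sub_sigma_algebra; exact: open_dotv_lt.
  - move=> q Qq; apply/negligible_ext_val0/negligible_dotv_lt0 => z Ez.
    by apply: hS; exists q.
  - by move=> w /negP; rewrite -leNgt.
have [N [_ N0 hN]] := naQ h qs.
move=> z [q Qq /supp_EP Ez]; apply: contrapT => hz.
apply: (Ez _ (@open_dotv_neq0 _ _ h) hz).
apply: (negligibleS _ (ext_val0_negligible (N0 q Qq))).
by move=> w /= hw; apply: contrapT => Nw; exact/hw/hN.
Qed.

Lemma supp_D_sub_span Q m (F : 'M[R]_(m, d)) :
  \bigcup_(q in Q) supp_E Y q `<=` [set z | (z <= F)%MS] ->
  supp_D Y Q `<=` [set z | (z <= F)%MS].
Proof.
move=> EF y /supp_DP Dy; apply/submx_dotvP => h hF.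
have hE q : Q q -> forall z, supp_E Y q z -> dotv h z = 0.
  by move=> Qq z Ez; move/submx_dotvP: (EF z (ex_intro2 _ _ q Qq Ez)); apply.
apply: contrapT => hy; apply: (Dy _ (@open_dotv_neq0 _ _ h) hy) => q Qq.
apply: (negligibleS (mu := q)
  (A := [set w | dotv h (Y w) < 0] `|` [set w | dotv (- h) (Y w) < 0])).
  by move=> w /= /eqP; rewrite neq_lt dotvNl oppr_lt0 => /orP.
by apply: negligibleU; apply: negligible_dotv_lt0 => z Ez; rewrite ?dotvNl (hE q) ?oppr0.
Qed.

End Supports.

Section Hulls.
Variables (R : realType) (d n : nat) (A : set 'rV[R]_d) (F : 'M[R]_(n, d)).
Variable lam : 'rV[R]_n.
Hypotheses (FA : row_set F `<=` A) (AF : A `<=` [set x | (x <= F)%MS]).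
Hypotheses (lam1 : \sum_i lam 0 i = 1) (lamF : lam *m F = 0).

Lemma aff_hull_sub_span (B : set 'rV[R]_d) :
  B `<=` [set x | (x <= F)%MS] -> aff_hull B `<=` [set x | (x <= F)%MS].
Proof.
move=> BF _ [k [v [l [vB _ ->]]]]; apply: summx_sub => i _.
exact/scalemx_sub/BF/vB.
Qed.

Lemma conv_hull_sub_aff_hull (B : set 'rV[R]_d) : conv_hull B `<=` aff_hull B.
Proof. by move=> _ [k [v [l [vB _ l1 ->]]]]; exists k, v, l. Qed.

Lemma aff_hull_span : aff_hull A = [set x | (x <= F)%MS].
Proof.
apply/seteqP; split; first exact: aff_hull_sub_span.
move=> _ /submxP [c ->]; pose s := \sum_j c 0 j.
exists n, (fun i => row i F), (fun i => c 0 i + (1 - s) * lam 0 i); split.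
- by move=> i; apply: FA; exists i.
- by rewrite big_split /= -mulr_sumr lam1 mulr1 addrC subrK.
- rewrite mulmx_sum_row; under [RHS]eq_bigr do rewrite scalerDl -scalerA.
  by rewrite big_split /= -scaler_sumr -!mulmx_sum_row lamF scaler0 addr0.
Qed.

Hypothesis lam_gt0 : forall i, 0 < lam 0 i.

Lemma conv_hull_near0 : \forall x \near (0 : 'rV[R]_d), (x <= F)%MS -> conv_hull A x.
Proof.
(* [w x] are barycentric coordinates of [x] w.r.t. the rows of [F]; they are affine
   in [x] and equal [lam] at [x = 0]. *)
pose P := pinvmx F; pose w x : 'rV[R]_n := lam + x *m P - (\sum_j (x *m P) 0 j) *: lam.
have wF x : (x <= F)%MS -> w x *m F = x.
  by move=> xF; rewrite !mulmxDl mulNmx -scalemxAl lamF scaler0 subr0 add0r mulmxKpV.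
have w1 x : \sum_k w x 0 k = 1.
  under eq_bigr do rewrite !mxE.
  rewrite sumrB big_split /= -mulr_sumr lam1 mulr1.
  by under [X in _ - X]eq_bigr do rewrite mxE; rewrite addrK.
pose u k := (col k P)^T - lam 0 k *: \sum_j (col j P)^T.
have wE x k : w x 0 k = lam 0 k + dotv (u k) x.
  rewrite dotvDl dotvNl dotvZl dotv_suml dotv_trmx_col.
  by under eq_bigr do rewrite dotv_trmx_col; rewrite !mxE; ring.
have : \forall x \near (0 : 'rV[R]_d), (forall k, 0 < w x 0 k).
  apply: (@filter_forall _ _ (fun k x => 0 < w x 0 k) (nbhs (0 : 'rV[R]_d)) _) => k.
  have wk : lam 0 k + dotv (u k) x @[x --> (0 : 'rV[R]_d)] --> lam 0 k.
    rewrite -[X in _ --> X]addr0 -[X in _ + X](linear0 (dotv (u k))).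
    exact: (cvgD (cvg_cst (lam 0 k)) (@dotv_continuous _ _ (u k) 0)).
  by apply: filterS (cvgr_gt _ wk 0 (lam_gt0 k)) => x; rewrite wE.
apply: filterS => x w_gt0 xF.
exists n, (fun i => row i F), (fun k => w x 0 k); split => //.
- by move=> i; apply: FA; exists i.
- by move=> k; exact: ltW.
- by rewrite -mulmx_sum_row wF.
Qed.

Lemma rel_int_conv_hull0 : rel_int (conv_hull A) 0.
Proof.
split.
  exists n, (fun i => row i F), (fun i => lam 0 i); split => //.
  - by move=> i; apply: FA; exists i.
  - by move=> i; exact: ltW.
  - by rewrite -mulmx_sum_row lamF.
have /nbhs_ballP [e e_gt0 eA] := conv_hull_near0.
exists e => // x [/eA xA ax]; apply: xA.
by apply: (aff_hull_sub_span _ ax) => y /conv_hull_sub_aff_hull; exact: aff_hull_sub_span.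
Qed.

End Hulls.

Unset Implicit Arguments.

Theorem proposition4 (R : realType) (Omega : ptopologicalType) (d : nat)
    (Q : set (borel_prob Omega R)) (Y : Omega -> 'rV[R]_d) :
  polish_space R Omega ->
  Q !=set0 ->
  convex_probs Q ->
  univ_measurable_fun Y ->
  NA Q Y ->
  exists2 p, Q p &
    rel_int (conv_hull (supp_E Y p)) 0 /\
    aff_hull (supp_E Y p) = aff_hull (supp_D Y Q).
Proof.
move=> _ [q0 Qq0] cQ mY naQ.
have [z0 Ez0] := supp_E_neq0 Y q0.
have [n [F [FS SF naF]]] := finite_NA_family (ex_intro2 _ _ q0 Qq0 Ez0)
  (geometric_NA_supp_E mY naQ).
have [lam [lam_gt0 lam1 lamF]] := stiemke_convex naF.
have [p Qp Ep] : exists2 p, Q p & row_set F `<=` supp_E Y p.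
  have sQ z : z \in codom (fun i => row i F) -> (\bigcup_(q in Q) supp_E Y q) z.
    by move=> /codomP [i ->]; apply: FS; exists i.
  have [p Qp Ep] := supp_E_mixture Qq0 cQ sQ.
  by exists p => // _ [i _ <-]; apply: Ep; exact: codom_f.
have ED : supp_E Y p `<=` supp_D Y Q := supp_E_sub_D Qp.
have DF := supp_D_sub_span SF.
have EF : supp_E Y p `<=` [set z | (z <= F)%MS] by move=> z /ED /DF.
exists p => //; split; first exact: rel_int_conv_hull0 Ep EF lam1 lamF lam_gt0.
rewrite (aff_hull_span Ep EF lam1 lamF).
by rewrite (aff_hull_span (subset_trans Ep ED) DF lam1 lamF).
Qed.
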